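(* For every $\epsilon$ with $0<\epsilon<10^{-12}$ there exists $k_0=k_0(\epsilon)$ such that for every $k\ge k_0$ the following holds: if $K>(1-\epsilon)k$ and $G$ is a two-multicoloured (red/blue) $\tfrac{27}{8}\epsilon^4k$-almost-complete graph on $K$ vertices, then $G$ contains a red connected-matching on at least $(\tfrac23-7\epsilon^{1/8})k$ vertices or a blue connected-matching on at least $(\tfrac23-7\epsilon^{1/8})k$ vertices.
   Context: A two-multicolouring assigns each edge a nonempty subset of {red, blue}; $G_{\mathrm{red}}$ ($G_{\mathrm{blue}}$) is the spanning subgraph of edges whose set contains red (blue). A graph on $N$ vertices is $a$-almost-complete if its minimum degree is at least $(N-1)-a$. A matching is a set of pairwise vertex-disjoint edges; its number of vertices is twice its number of edges. A red (blue) connected-matching is a matching in $G_{\mathrm{red}}$ ($G_{\mathrm{blue}}$) all of whose edges lie in one connected component of $G_{\mathrm{red}}$ ($G_{\mathrm{blue}}$). *)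

From Stdlib Require Import Reals List Arith.
Import ListNotations.
Open Scope R_scope.

(* A two-multicoloured graph on vertex set {0,...,K-1}: each pair of vertices
   carries a (possibly empty) subset of {red, blue}, described by the boolean
   relations [red] and [blue]; the pair is an edge of G iff the subset is
   nonempty (red || blue). *)
Definition two_multicoloured (K : nat) (red blue : nat -> nat -> bool) : Prop :=
  (forall i j, (i < K)%nat -> (j < K)%nat -> red i j = red j i) /\
  (forall i j, (i < K)%nat -> (j < K)%nat -> blue i j = blue j i) /\
  (forall i, (i < K)%nat -> red i i = false) /\
  (forall i, (i < K)%nat -> blue i i = false).

Definition gedge (red blue : nat -> nat -> bool) (i j : nat) : bool :=
  red i j || blue i j.

Definition degree (K : nat) (red blue : nat -> nat -> bool) (i : nat) : nat :=
  length (filter (fun j => gedge red blue i j) (seq 0 K)).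

Definition almost_complete (K : nat) (red blue : nat -> nat -> bool) (a : R) : Prop :=
  forall i, (i < K)%nat -> INR (degree K red blue i) >= (INR K - 1) - a.

Inductive connected (K : nat) (c : nat -> nat -> bool) : nat -> nat -> Prop :=
| conn_refl : forall x, (x < K)%nat -> connected K c x x
| conn_step : forall x y z, (x < K)%nat -> (y < K)%nat -> c x y = true ->
    connected K c y z -> connected K c x z.

Definition matching_vertices (M : list (nat * nat)) : list nat :=
  flat_map (fun e => [fst e; snd e]) M.

Definition is_matching (K : nat) (c : nat -> nat -> bool) (M : list (nat * nat)) : Prop :=
  (forall e, In e M -> (fst e < K)%nat /\ (snd e < K)%nat /\ c (fst e) (snd e) = true) /\
  NoDup (matching_vertices M).

Definition connected_matching (K : nat) (c : nat -> nat -> bool) (M : list (nat * nat)) : Prop :=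
  is_matching K c M /\
  (forall e1 e2, In e1 M -> In e2 M -> connected K c (fst e1) (fst e2)).

Definition mvertices (M : list (nat * nat)) : nat := (2 * length M)%nat.

From Stdlib Require Import Reals List Arith.
From Stdlib Require Import Lia Lra ZArith Classical ClassicalEpsilon Permutation.
Import ListNotations.
Close Scope R_scope.

(* Every vertex misses at most S = O(eps^4 k) other vertices.  Some colour, say red,
   has a component C with |C| >= K - 2S: unless the blue component of a vertex is tiny,
   the many vertices outside it are red-adjacent to almost everything and glue all
   vertices into one red component.  In C take a maximum red matching M and let U be
   the unmatched vertices.  U is red-independent, hence nearly blue-complete and
   blue-connected; and since M has no augmenting path, every edge of M has an endpoint
   with at most one red neighbour in U.  Matching these endpoints into U, and then U
   within itself, greedily in blue gives a blue connected matching; either it or M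
   covers at least (2|C| - 6S - 6)/3 vertices, which is 2K/3 - O(eps^4 k). *)

Section Connectivity.
Variables (K : nat) (c : nat -> nat -> bool).

Lemma connected_lt x y : connected K c x y -> x < K /\ y < K.
Proof. induction 1; tauto. Qed.

Lemma connected_trans x y z :
  connected K c x y -> connected K c y z -> connected K c x z.
Proof. induction 1; intros; auto. eapply conn_step; eauto. Qed.

Lemma connected_edge x y : x < K -> y < K -> c x y = true -> connected K c x y.
Proof. intros; apply conn_step with y; auto; constructor; auto. Qed.

Hypothesis c_sym : forall i j, i < K -> j < K -> c i j = c j i.

Lemma connected_sym x y : connected K c x y -> connected K c y x.
Proof.
  induction 1 as [x Hx|x y z Hx Hy Hxy _ IH]; [constructor; auto|].
  apply connected_trans with y; auto.
  apply connected_edge; auto. rewrite c_sym; auto.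
Qed.

Definition component (v : nat) : list nat :=
  filter (fun y => if excluded_middle_informative (connected K c v y) then true else false)
    (seq 0 K).

Lemma In_component v y : In y (component v) <-> connected K c v y.
Proof.
  unfold component. rewrite filter_In, in_seq.
  destruct (excluded_middle_informative (connected K c v y)) as [H|H].
  - pose proof (connected_lt _ _ H). split; [tauto|split; [lia|auto]].
  - split; [intros [_ E]; discriminate|tauto].
Qed.

Lemma NoDup_component v : NoDup (component v).
Proof. apply NoDup_filter, seq_NoDup. Qed.

End Connectivity.

Lemma NoDup_longer_exists_notin (L X : list nat) :
  NoDup L -> length X < length L -> exists y, In y L /\ ~ In y X.
Proof.
  intros HL Hlen. apply NNPP; intro Hn.
  assert (Hincl : incl L X).
  { intros y Hy. apply NNPP; intro; apply Hn; eauto. }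
  pose proof (NoDup_incl_length HL Hincl). lia.
Qed.

Lemma In_remove_middle (z y : nat) l1 l2 : In z (l1 ++ l2) -> In z (l1 ++ y :: l2).
Proof. rewrite !in_app_iff; simpl; tauto. Qed.

Lemma matching_vertices_length M : length (matching_vertices M) = 2 * length M.
Proof. induction M; simpl; auto. rewrite IHM. lia. Qed.

Lemma matching_vertices_app M1 M2 :
  matching_vertices (M1 ++ M2) = matching_vertices M1 ++ matching_vertices M2.
Proof. apply flat_map_app. Qed.

Lemma endpoints_In_matching_vertices e M :
  In e M -> In (fst e) (matching_vertices M) /\ In (snd e) (matching_vertices M).
Proof.
  induction M as [|e' M IH]; simpl; [tauto|]. intros [<-|H]; simpl; [tauto|].
  destruct (IH H); tauto.
Qed.

Lemma In_matching_vertices z M :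
  In z (matching_vertices M) -> exists e, In e M /\ (z = fst e \/ z = snd e).
Proof.
  induction M as [|e' M IH]; simpl; [tauto|]. intros [H|[H|H]]; eauto.
  destruct (IH H) as [e [He1 He2]]; eauto.
Qed.

Lemma NoDup_map_endpoint (f : nat * nat -> nat) M :
  (forall e, f e = fst e \/ f e = snd e) ->
  NoDup (matching_vertices M) -> NoDup (map f M).
Proof.
  intros Hf. induction M as [|e M IH]; simpl; intros H; constructor.
  - intro Hin. apply in_map_iff in Hin. destruct Hin as [e' [He' Hin]].
    destruct (endpoints_In_matching_vertices e' M Hin) as [H1 H2].
    inversion H; subst. inversion H5; subst.
    destruct (Hf e) as [E|E]; destruct (Hf e') as [E'|E']; rewrite E, E' in He'.
    all: rewrite <- He' in *; simpl in *; tauto.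
  - apply IH. inversion H; subst. inversion H3; subst. auto.
Qed.

Definition nearly_complete_on (S : nat) (c : nat -> nat -> bool) (L : list nat) : Prop :=
  forall x, In x L -> exists B, length B <= S /\
    forall y, In y L -> y <> x -> c x y = false -> In y B.

Definition nearly_joined (T : nat) (c : nat -> nat -> bool) (A U : list nat) : Prop :=
  forall a, In a A -> exists B, length B <= T /\
    forall u, In u U -> c u a = false -> In u B.

Lemma nearly_complete_on_incl S c L L' :
  incl L' L -> nearly_complete_on S c L -> nearly_complete_on S c L'.
Proof.
  intros Hincl HL x Hx. destruct (HL x (Hincl x Hx)) as [B [HBl HB]].
  exists B; split; auto.
Qed.

Lemma nearly_joined_incl T c A U A' U' :
  incl A' A -> incl U' U -> nearly_joined T c A U -> nearly_joined T c A' U'.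
Proof.
  intros HA HU HJ a Ha. destruct (HJ a (HA a Ha)) as [B [HBl HB]].
  exists B; split; auto.
Qed.

(* Anchoring every edge in [U] makes the matching connected as soon as [U] is. *)
Definition matching_anchored (c : nat -> nat -> bool) (U A : list nat)
    (Q : list (nat * nat)) : Prop :=
  (forall e, In e Q -> In (fst e) U /\ c (fst e) (snd e) = true) /\
  (forall z, In z (matching_vertices Q) -> In z U \/ In z A) /\
  NoDup (matching_vertices Q).

Lemma matching_anchored_nil c U A : matching_anchored c U A [].
Proof. split; [|split]; simpl; [tauto|tauto|constructor]. Qed.

Lemma matching_anchored_cons c U A U' A' Q x y :
  matching_anchored c U' A' Q -> incl U' U -> incl A' A ->
  In x U -> In y U \/ In y A -> x <> y -> c x y = true ->
  ~ In x (U' ++ A') -> ~ In y (U' ++ A') ->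
  matching_anchored c U A ((x, y) :: Q).
Proof.
  intros [HQ1 [HQ2 HQ3]] HU HA Hx Hy Hxy Hc Hx' Hy'.
  assert (Hfresh : forall z, ~ In z (U' ++ A') -> ~ In z (matching_vertices Q)).
  { intros z Hz Hin. apply Hz, in_or_app. destruct (HQ2 z Hin); auto. }
  split; [|split]; simpl.
  - intros e [<-|He]; [simpl; auto|]. destruct (HQ1 e He); auto.
  - intros z [<-|[<-|Hz]]; auto. destruct (HQ2 z Hz); auto.
  - constructor; [intros [H|H]; [auto|exact (Hfresh x Hx' H)]|].
    constructor; [exact (Hfresh y Hy')|exact HQ3].
Qed.

Lemma greedy_matching_within c S L :
  NoDup L -> nearly_complete_on S c L ->
  exists Q, matching_anchored c L [] Q /\ length L <= 2 * length Q + S + 1.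
Proof.
  remember (length L) as n eqn:Hn. revert L Hn.
  induction n as [n IH] using lt_wf_ind. intros [|x rest] Hn HL HB.
  { exists []. split; [apply matching_anchored_nil|simpl in *; lia]. }
  destruct (HB x (or_introl eq_refl)) as [Bx [HBl HBx]].
  inversion HL as [|? ? Hx Hrest]; subst.
  destruct (le_lt_dec (length rest) S) as [Hs|Hs].
  { exists []. split; [apply matching_anchored_nil|simpl; lia]. }
  destruct (NoDup_longer_exists_notin rest Bx Hrest ltac:(lia)) as [y [Hy Hny]].
  assert (Hxy : x <> y) by (intros ->; contradiction).
  assert (Hc : c x y = true).
  { destruct (c x y) eqn:E; [reflexivity|]. exfalso; apply Hny, HBx; simpl; auto. }
  destruct (in_split _ _ Hy) as [r1 [r2 ->]].
  assert (Hincl : incl (r1 ++ r2) (x :: r1 ++ y :: r2)).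
  { intros z Hz. right. apply In_remove_middle; auto. }
  destruct (IH (length (r1 ++ r2))) with (L := r1 ++ r2) as [Q [HQ HQl]]; try reflexivity.
  { cbn [length]. rewrite !length_app. cbn [length]. lia. }
  { eapply NoDup_remove_1; eauto. }
  { eapply nearly_complete_on_incl; eauto. }
  exists ((x, y) :: Q). split.
  - eapply matching_anchored_cons; eauto.
    + intros z [].
    + simpl; auto.
    + left; right; apply in_or_app; simpl; auto.
    + rewrite app_nil_r. intro H; apply Hx, In_remove_middle; auto.
    + rewrite app_nil_r. eapply NoDup_remove_2; eauto.
  - simpl. rewrite !length_app in *. simpl. lia.
Qed.

Lemma greedy_matching_into c S T A U :
  NoDup A -> NoDup U -> (forall a, In a A -> ~ In a U) ->
  nearly_complete_on S c U -> nearly_joined T c A U -> length A + T < length U ->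
  exists Q, matching_anchored c U A Q /\ length A + length U <= 2 * length Q + S + 1.
Proof.
  revert U. induction A as [|a A IH]; intros U HA HU Hdis HUc HAU Hlen.
  { exact (greedy_matching_within c S U HU HUc). }
  destruct (HAU a (or_introl eq_refl)) as [Ba [HBal HBa]].
  cbn [length] in Hlen.
  destruct (NoDup_longer_exists_notin U Ba HU ltac:(lia)) as [u [Hu Hnu]].
  assert (Hc : c u a = true).
  { destruct (c u a) eqn:E; [reflexivity|]. exfalso; apply Hnu, HBa; auto. }
  assert (Hua : u <> a) by (intros ->; apply (Hdis a); simpl; auto).
  inversion HA as [|? ? Ha HA']; subst.
  destruct (in_split _ _ Hu) as [u1 [u2 ->]].
  assert (Hincl : incl (u1 ++ u2) (u1 ++ u :: u2)) by (intros z; apply In_remove_middle).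
  assert (Hun : ~ In u (u1 ++ u2)) by (eapply NoDup_remove_2; eauto).
  rewrite length_app in Hlen; cbn [length] in Hlen.
  destruct (IH (u1 ++ u2)) as [Q [HQ HQl]]; auto.
  { eapply NoDup_remove_1; eauto. }
  { intros a' Ha' Hin. apply (Hdis a'); simpl; auto. }
  { eapply nearly_complete_on_incl; eauto. }
  { apply (nearly_joined_incl T c (a :: A) (u1 ++ u :: u2)); auto.
    intros z Hz; right; exact Hz. }
  { rewrite length_app; lia. }
  exists ((u, a) :: Q). split.
  - eapply matching_anchored_cons; eauto.
    + intros z Hz; right; exact Hz.
    + right; left; reflexivity.
    + rewrite in_app_iff. intros [H|H]; [tauto|]. apply (Hdis u); simpl; auto.
    + rewrite in_app_iff. intros [H|H]; [|tauto]. apply (Hdis a); simpl; auto.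
  - rewrite length_app in *. cbn [length] in *. lia.
Qed.

Definition few_nonneighbours (K S : nat) (c c' : nat -> nat -> bool) : Prop :=
  forall i, i < K -> exists B, length B <= S /\
    forall y, y < K -> c i y = false -> c' i y = false -> In y B.

Lemma nonneighbour_edge_other_colour K (c c' : nat -> nat -> bool) x y B :
  (forall y, y < K -> c x y = false -> c' x y = false -> In y B) ->
  y < K -> ~ In y B -> c x y = false -> c' x y = true.
Proof.
  intros HB Hy Hny Hc. destruct (c' x y) eqn:E; [reflexivity|].
  exfalso. apply Hny, HB; auto.
Qed.

Lemma few_nonneighbours_swap K S c c' :
  few_nonneighbours K S c c' -> few_nonneighbours K S c' c.
Proof.
  intros H i Hi. destruct (H i Hi) as [B [HBl HB]]. exists B; split; auto.
Qed.

Definition matching_within (C : list nat) (c : nat -> nat -> bool)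
    (M : list (nat * nat)) : Prop :=
  (forall e, In e M -> In (fst e) C /\ In (snd e) C /\ c (fst e) (snd e) = true) /\
  NoDup (matching_vertices M).

Lemma matching_within_length C c M :
  matching_within C c M -> 2 * length M <= length C.
Proof.
  intros [HM HMnd]. rewrite <- matching_vertices_length.
  apply NoDup_incl_length; auto. intros z Hz.
  destruct (In_matching_vertices z M Hz) as [e [He [-> | ->]]]; apply HM; auto.
Qed.

Lemma exists_max_nat (P : nat -> Prop) (B : nat) :
  P 0 -> (forall n, P n -> n <= B) -> exists n, P n /\ forall n', P n' -> n' <= n.
Proof.
  intros H0 HB.
  assert (Hdown : forall t n, P n -> (forall n', P n' -> n' <= n + t) ->
            exists n, P n /\ forall n', P n' -> n' <= n).
  { induction t as [|t IH]; intros n Hn Ht.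
    - exists n; split; auto. intros n' H'; specialize (Ht n' H'); lia.
    - destruct (classic (P (n + S t))) as [Hp|Hp].
      + exists (n + S t); split; auto.
      + apply (IH n Hn). intros n' H'. specialize (Ht n' H').
        assert (n' <> n + S t) by (intros ->; contradiction). lia. }
  apply (Hdown B 0 H0). intros n' H'; specialize (HB n' H'); lia.
Qed.

Lemma exists_maximum_matching C c : exists M, matching_within C c M /\
  forall M', matching_within C c M' -> length M' <= length M.
Proof.
  destruct (exists_max_nat (fun n => exists M, matching_within C c M /\ length M = n)
              (length C)) as [n [[M [HM <-]] Hmax]].
  - exists []. split; auto. split; simpl; [tauto|constructor].
  - intros n [M [HM <-]]. pose proof (matching_within_length C c M HM). lia.
  - exists M; split; auto. intros M' HM'. apply Hmax; eauto.
Qed.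

Section IndependentSet.
Variables (K S : nat) (c c' : nat -> nat -> bool) (U : list nat).
Hypothesis few : few_nonneighbours K S c c'.
Hypothesis U_lt : forall x, In x U -> x < K.
Hypothesis U_independent : forall u v, In u U -> In v U -> u <> v -> c u v = false.

Lemma independent_set_nearly_complete : nearly_complete_on S c' U.
Proof.
  intros x Hx. destruct (few x (U_lt x Hx)) as [B [HBl HB]].
  exists B; split; [exact HBl|]. intros y Hy Hyx Hc'.
  apply HB; auto.
Qed.

Hypothesis c'_sym : forall i j, i < K -> j < K -> c' i j = c' j i.
Hypothesis U_nodup : NoDup U.
Hypothesis U_large : 2 * S + 3 <= length U.

Lemma independent_set_connected x y : In x U -> In y U -> connected K c' x y.
Proof.
  intros Hx Hy. destruct (Nat.eq_dec x y) as [<-|Hxy]; [constructor; auto|].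
  destruct (few x (U_lt x Hx)) as [Bx [HBxl HBx]].
  destruct (few y (U_lt y Hy)) as [By [HByl HBy]].
  destruct (NoDup_longer_exists_notin U (x :: y :: Bx ++ By) U_nodup) as [z [Hz Hnz]].
  { cbn [length]. rewrite length_app. lia. }
  cbn [In] in Hnz. rewrite in_app_iff in Hnz.
  assert (Hzx : z <> x) by (intros ->; tauto). assert (Hzy : z <> y) by (intros ->; tauto).
  assert (HzBx : ~ In z Bx) by tauto. assert (HzBy : ~ In z By) by tauto.
  apply conn_step with z; auto.
  - apply (nonneighbour_edge_other_colour K c c' x z Bx); auto.
  - apply connected_sym; auto. apply connected_edge; auto.
    apply (nonneighbour_edge_other_colour K c c' y z By); auto.
Qed.

End IndependentSet.

Section MaximumMatching.
Variables (K S : nat) (c1 c2 : nat -> nat -> bool) (C : list nat) (M : list (nat * nat)).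
Hypothesis c1_sym : forall i j, i < K -> j < K -> c1 i j = c1 j i.
Hypothesis c2_sym : forall i j, i < K -> j < K -> c2 i j = c2 j i.
Hypothesis few : few_nonneighbours K S c1 c2.
Hypothesis C_nodup : NoDup C.
Hypothesis C_lt : forall x, In x C -> x < K.
Hypothesis M_within : matching_within C c1 M.
Hypothesis M_maximum : forall M', matching_within C c1 M' -> length M' <= length M.

Definition matchedb (x : nat) : bool :=
  if in_dec Nat.eq_dec x (matching_vertices M) then true else false.

Definition unmatched : list nat := filter (fun x => negb (matchedb x)) C.

Lemma In_unmatched x : In x unmatched <-> In x C /\ ~ In x (matching_vertices M).
Proof.
  unfold unmatched, matchedb. rewrite filter_In.
  destruct (in_dec Nat.eq_dec x (matching_vertices M)); simpl; intuition discriminate.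
Qed.

Lemma NoDup_unmatched : NoDup unmatched.
Proof. apply NoDup_filter; auto. Qed.

Lemma unmatched_length : length unmatched + 2 * length M = length C.
Proof.
  destruct M_within as [HM HMnd].
  assert (Hmatched : length (filter matchedb C) = length (matching_vertices M)).
  { assert (Hnd : NoDup (filter matchedb C)) by (apply NoDup_filter; auto).
    apply Nat.le_antisymm; apply NoDup_incl_length; auto; intros x Hx.
    - rewrite filter_In in Hx. unfold matchedb in Hx.
      destruct (in_dec Nat.eq_dec x (matching_vertices M)); [auto|easy].
    - rewrite filter_In. unfold matchedb.
      destruct (in_dec Nat.eq_dec x (matching_vertices M)); [|contradiction].
      split; auto. destruct (In_matching_vertices x M Hx) as [e [He [-> | ->]]]; apply HM; auto. }
  pose proof (filter_length matchedb C). unfold unmatched.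
  rewrite <- matching_vertices_length. lia.
Qed.

Lemma unmatched_independent u v :
  In u unmatched -> In v unmatched -> u <> v -> c1 u v = false.
Proof.
  rewrite !In_unmatched. intros [HuC Hu] [HvC Hv] Huv.
  destruct (c1 u v) eqn:E; [exfalso|reflexivity].
  destruct M_within as [HM HMnd].
  assert (Hlarger : matching_within C c1 ((u, v) :: M)).
  { split; simpl.
    - intros e [<-|He]; auto.
    - constructor; [intros [H|H]; auto|constructor; auto]. }
  specialize (M_maximum _ Hlarger). simpl in M_maximum. lia.
Qed.

Lemma no_augmenting_path e u v :
  In e M -> In u unmatched -> In v unmatched -> u <> v ->
  c1 (fst e) u = true -> c1 (snd e) v = true -> False.
Proof.
  intros He Hu Hv Huv Hcu Hcv. rewrite In_unmatched in Hu, Hv.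
  destruct M_within as [HM HMnd].
  destruct (in_split _ _ He) as [M1 [M2 HMe]].
  destruct (HM e He) as [Hf [Hs Hc]].
  assert (Haug : matching_within C c1 ((u, fst e) :: (snd e, v) :: M1 ++ M2)).
  { split.
    - intros e' [<-|[<-|He']]; simpl.
      + split; [tauto|split; [auto|]]. rewrite c1_sym; auto; apply C_lt; tauto.
      + split; [auto|split; [tauto|auto]].
      + apply HM. rewrite HMe. rewrite in_app_iff in *; simpl; tauto.
    - assert (HN : NoDup (u :: v :: matching_vertices M)).
      { constructor; [intros [H|H]; [auto|tauto]|constructor; tauto]. }
      rewrite HMe, matching_vertices_app in HN. simpl in HN.
      eapply Permutation_NoDup; [|exact HN].
      simpl. rewrite matching_vertices_app. apply perm_skip.
      apply perm_trans with (v :: fst e :: snd e ::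
                               matching_vertices M1 ++ matching_vertices M2).
      + apply perm_skip.
        apply perm_trans with (fst e :: matching_vertices M1 ++ snd e :: matching_vertices M2).
        * apply Permutation_sym, Permutation_middle.
        * apply perm_skip, Permutation_sym, Permutation_middle.
      + eapply perm_trans; [apply perm_swap|]. apply perm_skip, perm_swap. }
  specialize (M_maximum _ Haug). rewrite HMe in M_maximum. simpl in M_maximum.
  rewrite !length_app in M_maximum. simpl in M_maximum. lia.
Qed.

Definition light (x : nat) : Prop :=
  exists w, forall u, In u unmatched -> c1 x u = true -> u = w.

Lemma matched_edge_light_endpoint e : In e M -> light (fst e) \/ light (snd e).
Proof.
  intros He. destruct (classic (light (fst e))) as [L|L]; [left; exact L|right].
  assert (Hu1 : exists u1, In u1 unmatched /\ c1 (fst e) u1 = true).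
  { apply NNPP; intro Hn; apply L; exists 0; intros u Hu Hc; exfalso; eauto. }
  destruct Hu1 as [u1 [Hu1 Hc1]].
  assert (Hu2 : exists u2, In u2 unmatched /\ c1 (fst e) u2 = true /\ u2 <> u1).
  { apply NNPP; intro Hn; apply L; exists u1; intros u Hu Hc.
    apply NNPP; intro; apply Hn; eauto. }
  destruct Hu2 as [u2 [Hu2 [Hc2 Hne]]].
  exists 0. intros v Hv Hcv. exfalso.
  destruct (Nat.eq_dec v u1) as [->|Hvu1].
  - apply (no_augmenting_path e u2 u1); auto.
  - apply (no_augmenting_path e u1 v); auto.
Qed.

Definition light_endpoint (e : nat * nat) : nat :=
  if excluded_middle_informative (light (fst e)) then fst e else snd e.

Definition light_endpoints : list nat := map light_endpoint M.

Lemma light_endpoint_cases e : light_endpoint e = fst e \/ light_endpoint e = snd e.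
Proof. unfold light_endpoint; destruct (excluded_middle_informative _); auto. Qed.

Lemma light_endpoints_light a : In a light_endpoints -> light a.
Proof.
  unfold light_endpoints. rewrite in_map_iff. intros [e [<- He]].
  unfold light_endpoint. destruct (excluded_middle_informative (light (fst e))); auto.
  destruct (matched_edge_light_endpoint e He); tauto.
Qed.

Lemma light_endpoints_matched a : In a light_endpoints -> In a (matching_vertices M).
Proof.
  unfold light_endpoints. rewrite in_map_iff. intros [e [<- He]].
  destruct (endpoints_In_matching_vertices e M He).
  destruct (light_endpoint_cases e) as [-> | ->]; auto.
Qed.

Lemma NoDup_light_endpoints : NoDup light_endpoints.
Proof. apply NoDup_map_endpoint; [apply light_endpoint_cases|apply M_within]. Qed.

Lemma light_endpoints_lt a : In a light_endpoints -> a < K.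
Proof.
  intros Ha. apply C_lt. apply light_endpoints_matched in Ha.
  destruct (In_matching_vertices a M Ha) as [e [He [-> | ->]]]; apply M_within; auto.
Qed.

Lemma light_endpoints_joined : nearly_joined (S + 1) c2 light_endpoints unmatched.
Proof.
  intros a Ha. destruct (light_endpoints_light a Ha) as [w Hw].
  destruct (few a (light_endpoints_lt a Ha)) as [Ba [HBal HBa]].
  exists (w :: Ba). split; [simpl; lia|].
  intros u Hu Hc. assert (HuK : u < K) by (apply C_lt, In_unmatched, Hu).
  rewrite c2_sym in Hc by auto using light_endpoints_lt.
  destruct (c1 a u) eqn:E.
  - left. symmetry. apply Hw; auto.
  - right. apply HBa; auto.
Qed.

Lemma light_endpoints_unmatched_disjoint a : In a light_endpoints -> ~ In a unmatched.
Proof. intros Ha. rewrite In_unmatched. intros [_ H]. apply H, light_endpoints_matched, Ha. Qed.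

Lemma matching_from_unmatched :
  3 * length M + S + 2 <= length C -> 2 * S + 3 <= length unmatched ->
  exists Q, connected_matching K c2 Q /\
    length M + length unmatched <= 2 * length Q + S + 1.
Proof.
  intros HM HU.
  pose proof unmatched_length as Hlen.
  assert (HUK : forall x, In x unmatched -> x < K) by (intros x Hx; apply C_lt, In_unmatched, Hx).
  destruct (greedy_matching_into c2 S (S + 1) light_endpoints unmatched) as [Q [[HQ1 [HQ2 HQ3]] HQl]].
  - apply NoDup_light_endpoints.
  - apply NoDup_unmatched.
  - apply light_endpoints_unmatched_disjoint.
  - apply (independent_set_nearly_complete K S c1); auto using unmatched_independent.
  - apply light_endpoints_joined.
  - unfold light_endpoints. rewrite length_map. lia.
  - exists Q. unfold light_endpoints in HQl. rewrite length_map in HQl. split; [|lia].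
    assert (Hconn : forall x y, In x unmatched -> In y unmatched -> connected K c2 x y)
      by (apply (independent_set_connected K S c1); auto using NoDup_unmatched, unmatched_independent).
    split; [split; [|exact HQ3]|].
    + intros e He. destruct (HQ1 e He) as [Hf Hc].
      destruct (endpoints_In_matching_vertices e Q He) as [_ Hs].
      destruct (HQ2 _ Hs); auto using light_endpoints_lt.
    + intros e1 e2 He1 He2. apply Hconn; apply HQ1; auto.
Qed.

Hypothesis C_connected : forall x y, In x C -> In y C -> connected K c1 x y.

Lemma maximum_matching_connected : connected_matching K c1 M.
Proof.
  destruct M_within as [HM HMnd]. split; [split; [|exact HMnd]|].
  - intros e He. destruct (HM e He) as [H1 [H2 H3]]. auto.
  - intros e1 e2 He1 He2. apply C_connected; apply HM; auto.
Qed.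

Lemma maximum_matching_or_other_colour :
  exists M', (connected_matching K c1 M' \/ connected_matching K c2 M') /\
    2 * length C <= 3 * mvertices M' + 6 * S + 6.
Proof.
  pose proof unmatched_length as Hlen. unfold mvertices.
  destruct (le_lt_dec (3 * length M + S + 2) (length C)) as [HM|HM];
    [destruct (le_lt_dec (2 * S + 3) (length unmatched)) as [HU|HU]|].
  - destruct (matching_from_unmatched HM HU) as [Q [HQ HQl]].
    exists Q; split; [right; exact HQ|lia].
  - exists M; split; [left; apply maximum_matching_connected|lia].
  - exists M; split; [left; apply maximum_matching_connected|lia].
Qed.

End MaximumMatching.

Lemma connected_set_monochromatic_matching K S c1 c2 C :
  (forall i j, i < K -> j < K -> c1 i j = c1 j i) ->
  (forall i j, i < K -> j < K -> c2 i j = c2 j i) ->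
  few_nonneighbours K S c1 c2 -> NoDup C ->
  (forall x y, In x C -> In y C -> connected K c1 x y) ->
  exists M, (connected_matching K c1 M \/ connected_matching K c2 M) /\
    2 * length C <= 3 * mvertices M + 6 * S + 6.
Proof.
  intros c1_sym c2_sym few HC HCconn.
  destruct (exists_maximum_matching C c1) as [M [HM Hmax]].
  apply (maximum_matching_or_other_colour K S c1 c2 C M); auto.
  intros x Hx. exact (proj2 (connected_lt K c1 x x (HCconn x x Hx Hx))).
Qed.

Section LargeComponent.
Variables (K S : nat) (c1 c2 : nat -> nat -> bool).
Hypothesis c1_sym : forall i j, i < K -> j < K -> c1 i j = c1 j i.
Hypothesis c2_sym : forall i j, i < K -> j < K -> c2 i j = c2 j i.
Hypothesis few : few_nonneighbours K S c1 c2.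
Hypothesis K_pos : 0 < K.

Lemma seq_length_le_incl (L : list nat) : incl (seq 0 K) L -> K <= length L.
Proof.
  intros H. rewrite <- (length_seq K 0) at 1. apply NoDup_incl_length; auto using seq_NoDup.
Qed.

Lemma components_cover :
  K <= S + length (component K c2 0) + length (component K c1 0).
Proof.
  destruct (few 0 K_pos) as [B [HBl HB]].
  apply Nat.le_trans with (length (B ++ component K c2 0 ++ component K c1 0)).
  2: { rewrite !length_app. lia. }
  apply seq_length_le_incl. intros y Hy. rewrite in_seq in Hy.
  rewrite !in_app_iff, !In_component.
  destruct (c2 0 y) eqn:E2; [right; left; apply connected_edge; auto; lia|].
  destruct (c1 0 y) eqn:E1; [right; right; apply connected_edge; auto; lia|].
  left. apply HB; auto. lia.
Qed.

Lemma connected_extend c x y z :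
  connected K c x y -> z < K -> c y z = true -> connected K c x z.
Proof.
  intros Hxy Hz Hc. apply connected_trans with y; auto.
  apply connected_edge; auto. apply (connected_lt K c x y Hxy).
Qed.

Lemma small_component_other_connected r :
  length (component K c2 0) + 2 * S < K -> connected K c2 0 r -> connected K c1 0 r.
Proof.
  intros Hsmall Hr. assert (HrK : r < K) by apply (connected_lt K c2 0 r Hr).
  destruct (few r HrK) as [Br [HBrl HBr]]. destruct (few 0 K_pos) as [B0 [HB0l HB0]].
  destruct (NoDup_longer_exists_notin (seq 0 K) (component K c2 0 ++ Br ++ B0) (seq_NoDup _ _))
    as [q [Hq Hnq]].
  { rewrite length_seq, !length_app. lia. }
  rewrite in_seq in Hq. rewrite !in_app_iff, In_component in Hnq.
  assert (Hq2 : forall x, connected K c2 0 x -> c2 x q = false).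
  { intros x Hx. destruct (c2 x q) eqn:E; [|reflexivity].
    exfalso. apply Hnq. left. apply (connected_extend c2 0 x q); auto; lia. }
  assert (Hrq : c1 r q = true).
  { apply (nonneighbour_edge_other_colour K c2 c1 r q Br); [|lia|tauto|auto].
    intros y Hy H2 H1. apply HBr; auto. }
  assert (H0q : c1 0 q = true).
  { apply (nonneighbour_edge_other_colour K c2 c1 0 q B0); [|lia|tauto|].
    - intros y Hy H2 H1. apply HB0; auto.
    - apply Hq2. constructor; auto. }
  apply connected_extend with q; auto.
  apply connected_edge; [lia|lia|auto].
  rewrite c1_sym; auto; lia.
Qed.

Lemma component_other_spanning y :
  S < length (component K c2 0) ->
  (forall r, connected K c2 0 r -> connected K c1 0 r) ->
  y < K -> connected K c1 0 y.
Proof.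
  intros Hlarge Hall Hy.
  destruct (classic (connected K c2 0 y)) as [Hy2|Hy2]; [auto|].
  destruct (few y Hy) as [By [HByl HBy]].
  destruct (NoDup_longer_exists_notin _ By (NoDup_component K c2 0) ltac:(lia))
    as [r [Hr Hnr]].
  rewrite In_component in Hr. assert (HrK : r < K) by apply (connected_lt K c2 0 r Hr).
  assert (Hyr : c2 y r = false).
  { destruct (c2 y r) eqn:E; [|reflexivity]. exfalso. apply Hy2.
    apply (connected_extend c2 0 r y); auto. rewrite c2_sym; auto. }
  apply (connected_extend c1 0 r y); auto. rewrite c1_sym; auto.
  apply (nonneighbour_edge_other_colour K c2 c1 y r By); auto.
Qed.

Lemma large_monochromatic_component :
  K <= length (component K c2 0) + 2 * S \/ K <= length (component K c1 0) + 2 * S.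
Proof.
  destruct (le_lt_dec K (length (component K c2 0) + 2 * S)) as [H|Hsmall]; [left; exact H|right].
  destruct (le_lt_dec (length (component K c2 0)) S) as [Htiny|Hlarge].
  - pose proof components_cover. lia.
  - enough (K <= length (component K c1 0)) by lia.
    apply seq_length_le_incl. intros y Hy. rewrite in_seq in Hy. rewrite In_component.
    apply component_other_spanning; [exact Hlarge| |lia].
    intros r. apply small_component_other_connected, Hsmall.
Qed.
End LargeComponent.

Lemma component_monochromatic_matching K S c1 c2 v :
  (forall i j, i < K -> j < K -> c1 i j = c1 j i) ->
  (forall i j, i < K -> j < K -> c2 i j = c2 j i) ->
  few_nonneighbours K S c1 c2 ->
  exists M, (connected_matching K c1 M \/ connected_matching K c2 M) /\
    2 * length (component K c1 v) <= 3 * mvertices M + 6 * S + 6.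
Proof.
  intros c1_sym c2_sym few.
  apply connected_set_monochromatic_matching; auto using NoDup_component.
  intros x y Hx Hy. rewrite In_component in Hx, Hy.
  apply connected_trans with v; auto. apply connected_sym; auto.
Qed.

Theorem monochromatic_connected_matching K S c1 c2 :
  (forall i j, i < K -> j < K -> c1 i j = c1 j i) ->
  (forall i j, i < K -> j < K -> c2 i j = c2 j i) ->
  few_nonneighbours K S c1 c2 ->
  exists M, (connected_matching K c1 M \/ connected_matching K c2 M) /\
    2 * K <= 3 * mvertices M + 10 * S + 6.
Proof.
  intros c1_sym c2_sym few.
  destruct K as [|K'] eqn:EK.
  { exists []. split; [left|simpl; lia].
    split; [split; [simpl; tauto|constructor]|simpl; tauto]. }
  rewrite <- EK in *.
  destruct (large_monochromatic_component K S c1 c2 c1_sym c2_sym few ltac:(lia))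
    as [H2|H1].
  - destruct (component_monochromatic_matching K S c2 c1 0) as [M [HM HMl]];
      auto using few_nonneighbours_swap.
    exists M; split; [tauto|lia].
  - destruct (component_monochromatic_matching K S c1 c2 0) as [M [HM HMl]]; auto.
    exists M; split; [tauto|lia].
Qed.

Lemma nonneighbours_length K red blue i :
  length (filter (fun j => negb (gedge red blue i j)) (seq 0 K)) + degree K red blue i = K.
Proof.
  unfold degree. pose proof (filter_length (fun j => gedge red blue i j) (seq 0 K)) as E.
  rewrite length_seq in E. lia.
Qed.

Open Scope R_scope.

Lemma almost_complete_few_nonneighbours K red blue a S :
  almost_complete K red blue a -> a + 1 <= INR S -> few_nonneighbours K S red blue.
Proof.
  intros Hac HS i Hi. exists (filter (fun j => negb (gedge red blue i j)) (seq 0 K)). split.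
  - apply INR_le. specialize (Hac i Hi).
    pose proof (f_equal INR (nonneighbours_length K red blue i)) as E.
    rewrite plus_INR in E. lra.
  - intros y Hy Hr Hb. apply filter_In. split; [apply in_seq; lia|].
    unfold gedge; rewrite Hr, Hb; reflexivity.
Qed.

Lemma Rpower_ge_base x y : 0 < x <= 1 -> y <= 1 -> x <= Rpower x y.
Proof.
  intros Hx Hy. unfold Rpower.
  assert (Hln : ln x <= 0).
  { destruct Hx as [Hx0 [Hx1| ->]]; [|rewrite ln_1; lra].
    left. rewrite <- ln_1. apply ln_increasing; lra. }
  rewrite <- (exp_ln x) at 1 by lra.
  destruct (Rle_lt_or_eq_dec (ln x) (y * ln x)) as [Hlt|Heq]; [nra| |].
  - left. apply exp_increasing, Hlt.
  - right. f_equal. exact Heq.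
Qed.

Lemma exists_nat_between x : 0 <= x -> exists n : nat, x <= INR n <= x + 1.
Proof.
  intros Hx. destruct (archimed x) as [H1 H2].
  assert (Hz : (0 <= up x)%Z) by (apply le_IZR; lra).
  exists (Z.to_nat (up x)). rewrite INR_IZR_INZ, Z2Nat.id by auto. lra.
Qed.

Lemma matching_size_estimate eps k K S m :
  0 < eps < 1 / 100 -> 2 <= eps * k -> S <= 27 / 8 * eps ^ 4 * k + 2 ->
  (1 - eps) * k < K -> 2 * K <= 3 * m + 10 * S + 6 ->
  (2 / 3 - 7 * Rpower eps (1 / 8)) * k <= m.
Proof.
  intros Heps Hk HS HK Hm.
  assert (Hroot : eps <= Rpower eps (1 / 8)) by (apply Rpower_ge_base; lra).
  assert (Hk0 : 0 < k) by nra.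
  assert (Heps3 : eps ^ 3 <= 1 / 1000000).
  { assert (eps ^ 3 <= (1 / 100) ^ 3) by (apply pow_incr; lra). simpl in *; lra. }
  assert (Hdeg : 10 * (27 / 8 * eps ^ 4 * k) <= eps * k).
  { replace (eps ^ 4) with (eps * eps ^ 3) by ring. nra. }
  nra.
Qed.

Theorem corollary7p16 :
  forall eps : R, 0 < eps < / 10 ^ 12 ->
  exists k0 : nat, forall k : nat, (k >= k0)%nat ->
  forall (K : nat) (red blue : nat -> nat -> bool),
    INR K > (1 - eps) * INR k ->
    two_multicoloured K red blue ->
    almost_complete K red blue ((27 / 8) * eps ^ 4 * INR k) ->
    (exists M, connected_matching K red M /\
       INR (mvertices M) >= (2 / 3 - 7 * Rpower eps (1 / 8)) * INR k) \/
    (exists M, connected_matching K blue M /\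
       INR (mvertices M) >= (2 / 3 - 7 * Rpower eps (1 / 8)) * INR k).
Proof.
  intros eps Heps.
  assert (Hsmall : eps < 1 / 100).
  { apply Rlt_trans with (/ 10 ^ 12); [tauto|]. rewrite Rdiv_1_l.
    apply Rinv_lt_contravar; simpl; lra. }
  destruct (exists_nat_between (2 / eps)) as [k0 [Hk0 _]].
  { apply Rlt_le, Rdiv_lt_0_compat; lra. }
  exists k0. intros k Hk K red blue HK [red_sym [blue_sym _]] Hac.
  apply le_INR in Hk.
  assert (Hek : 2 <= eps * INR k).
  { replace 2 with (eps * (2 / eps)) by (field; lra). apply Rmult_le_compat_l; lra. }
  assert (Ha : 0 <= 27 / 8 * eps ^ 4 * INR k).
  { pose proof (pos_INR k). pose proof (pow_lt eps 4 (proj1 Heps)). nra. }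
  destruct (exists_nat_between (27 / 8 * eps ^ 4 * INR k + 1)) as [S [HS1 HS2]]; [lra|].
  destruct (monochromatic_connected_matching K S red blue red_sym blue_sym
              (almost_complete_few_nonneighbours K red blue _ S Hac HS1)) as [M [HM HMl]].
  apply le_INR in HMl. rewrite !plus_INR, !mult_INR in HMl. simpl in HMl.
  assert (Hsize : INR (mvertices M) >= (2 / 3 - 7 * Rpower eps (1 / 8)) * INR k).
  { apply Rle_ge, (matching_size_estimate eps (INR k) (INR K) (INR S)); lra. }
  destruct HM; [left|right]; exists M; auto.
Qed.
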